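(* Assume (H$\mathscr K$), (H$\mathscr L$), (H$\mathscr M$), (H$\mathscr F$), (H$\mathscr G$), (H$\mathscr E$), (H$\gamma$), (H$\Psi$), $c_{\mathscr F}>c_{\mathscr G}\|\gamma\|^p$, and that $\mathscr F$ is strictly monotone, so that Problem 2 has a unique solution $\mathscr S(z,\xi)$ for each $(z,\xi)\in\mathscr K\times Y^*$. Then the map $\mathscr S\colon\mathscr K\times Y^*\to\mathcal W\cap\mathscr K$ is bounded: it maps bounded subsets of $\mathscr K\times Y^*$ (with norm $\|z\|_X+\|\xi\|_{Y^*}$) into bounded subsets of $\mathcal W$.
   Context: Setting. $X$ and $Y$ are real reflexive separable Banach spaces with duals $X^*,Y^*$; $\langle\cdot,\cdot\rangle_X$ and $\langle\cdot,\cdot\rangle_Y$ denote the duality pairings. Fix $1<p<\infty$. $\rightharpoonup$ denotes weak convergence. (H$\mathscr L$) $\mathscr L\colon D(\mathscr L)\subset X\to X^*$ is linear, densely defined and maximal monotone. Put $\mathcal W:=\{x\in D(\mathscr L): \mathscr Lx\in X^*\}$ with the graph norm $\|x\|_{\mathcal W}=\|x\|_X+\|\mathscr Lx\|_{X^*}$; ''$x_n\rightharpoonup x$ in $\mathcal W$'' means $x_n\rightharpoonup x$ in $X$ and $\mathscr Lx_n\rightharpoonup \mathscr Lx$ in $X^*$. (H$\mathscr K$) $\mathscr K\subset X$ is nonempty, closed and convex. (H$\mathscr M$) $\mathscr M\colon\mathscr K\to 2^{\mathscr K}$ has nonempty, closed, convex values, $0\in\operatorname{int}\big(\bigcap_{w\in\mathscr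 K}\mathscr M(w)\big)$, and: whenever $\{y_n\},\{x_n\}\subset\mathscr K$ satisfy $x_n\in\mathscr M(y_n)\cap D(\mathscr L)$, $y_n\rightharpoonup y$ in $\mathcal W$ and $x_n\rightharpoonup x$ in $\mathcal W$, then $x\in\mathscr M(y)\cap D(\mathscr L)$. (H$\mathscr F$) $\mathscr F\colon X\to X^*$ is bounded (maps bounded sets to bounded sets), monotone and hemicontinuous, and there are constants $c_{\mathscr F}>0$, $d_{\mathscr F}\ge 0$ with $\langle\mathscr F(x),x\rangle_X\ge c_{\mathscr F}\|x\|_X^p-d_{\mathscr F}$ for all $x\in X$. (H$\mathscr G$) $\mathscr G\colon Y\to 2^{Y^*}$ has nonempty, closed, convex values, its graph is sequentially closed with respect to strong convergence in $Y$ and weak convergence in $Y^*$, and there are constants $c_{\mathscr G},d_{\mathscr G}\ge0$ with $\|\xi\|_{Y^*}\le c_{\mathscr G}\|z\|_Y^{p-1}+d_{\mathscr G}$ for all $\xi\in\mathscr G(z)$, $z\in Y$. (H$\mathscr E$) $\mathscr E\in X^*$. (H$\gamma$) $\gamma\colon X\to Y$ is linear and continuous, with operator norm $\|\gamma\|$, and its restriction to $\mathcal W$ is compact from $\mathcal W$ into $Y$. (H$\Psi$) $\Psi\colon X\times X\to\mathbb R$ satisfies: (i) for each $x\in X$, $\Psi(x,\cdot)$ is convex and lower semicontinuous; (ii) there are $0<\eta<p$ and a bounded function $b_\Psi\colon X^3\to[0,\infty)$ such that $\Psi(x,y_1)-\Psi(x,y_2)\le b_\Psi(x,y_1,y_2)\|y_1-y_2\|_X^\eta$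 for all $x,y_1,y_2\in X$, and for each bounded $B\subset X$, $b_\Psi(z,0,x)/\|x\|_X^{p-\eta}\to0$ as $\|x\|_X\to\infty$ uniformly in $z\in B$; (iii) $\limsup_{n}(\Psi(w_n,y_n)-\Psi(w_n,x_n))\le\Psi(w,y)-\Psi(w,x)$ whenever $\{w_n\},\{y_n\},\{x_n\}\subset\mathscr K\cap D(\mathscr L)$ with $w_n\rightharpoonup w$, $x_n\rightharpoonup x$ in $\mathcal W$ and $y_n\to y$ in $X$; (iv) for every $v\in X$, $0$ belongs to the domain of the convex subdifferential $\partial\Psi(v,\cdot)$, $|\Psi(v,0)|\le e_\Psi$ for a constant $e_\Psi$, and there are constants $c_\Psi,d_\Psi\ge0$ and $1\le\beta<p$ with $\Psi(v,y)\ge -c_\Psi\|y\|_X^\beta-d_\Psi$ for all $v,y\in X$. Problem 2 (for given $(z,\xi)\in\mathscr K\times Y^*$): find $x\in\mathscr M(z)\cap D(\mathscr L)$ such that $\langle\mathscr Lx+\mathscr F(x)-\mathscr E,y-x\rangle_X+\langle\xi,\gamma(y-x)\rangle_Y\ge\Psi(z,x)-\Psi(z,y)$ for all $y\in\mathscr M(z)\cap D(\mathscr L)$. *)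

From HB Require Import structures.
From mathcomp Require Import all_boot all_order all_algebra.
From mathcomp Require Import all_classical all_reals all_analysis.
Set Implicit Arguments. Unset Strict Implicit. Unset Printing Implicit Defensive.
Import Order.TTheory GRing.Theory Num.Theory.
Import numFieldNormedType.Exports.
Local Open Scope classical_set_scope.
Local Open Scope ring_scope.

Section Dual.
Variables (R : realType) (X : normedModType R).

Definition lin_functional (f : X -> R) : Prop :=
  forall (a : R) (x y : X), f (a *: x + y) = a * f x + f y.

(* the (topological) dual X^* : bounded linear functionals; pairing = application *)
Definition dual : set (X -> R) :=
  [set f | lin_functional f /\ exists C : R, forall x : X, `|f x| <= C * `|x|].

Definition dnorm (f : X -> R) : R := sup [set `|f x| | x in [set x : X | `|x| <= 1]].

Definition bidual : set ((X -> R) -> R) :=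
  [set Phi | (forall (a : R) (f g : X -> R), dual f -> dual g ->
                Phi (fun x => a * f x + g x) = a * Phi f + Phi g)
          /\ exists C : R, forall f, dual f -> `|Phi f| <= C * dnorm f].

Definition reflexive_space : Prop :=
  forall Phi, bidual Phi -> exists x : X, forall f, dual f -> Phi f = f x.

Definition separable_space : Prop :=
  exists S : set X, countable S /\ closure S = setT.

Definition weak_cvg (u : nat -> X) (x : X) : Prop :=
  forall f, dual f -> (fun n => f (u n)) @ \oo --> f x.

Definition dweak_cvg (u : nat -> X -> R) (f : X -> R) : Prop :=
  (forall n, dual (u n)) /\ dual f /\
  forall Phi, bidual Phi -> (fun n => Phi (u n)) @ \oo --> Phi f.

Definition cvx (A : set X) : Prop :=
  forall x y (t : R), A x -> A y -> 0 <= t -> t <= 1 -> A (t *: x + (1 - t) *: y).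

Definition dcvx (A : set (X -> R)) : Prop :=
  forall f g (t : R), A f -> A g -> 0 <= t -> t <= 1 ->
    A (fun x => t * f x + (1 - t) * g x).

Definition dclosed (A : set (X -> R)) : Prop :=
  forall (u : nat -> X -> R) f, (forall n, A (u n)) -> dual f ->
    (fun n => dnorm (fun x => u n x - f x)) @ \oo --> (0 : R) -> A f.

Definition lsc (g : X -> R) : Prop :=
  forall y (a : R), a < g y -> \forall z \near y, a < g z.

End Dual.

Section Ops.
Variables (R : realType) (X Y : normedModType R).

Definition opnorm (g : X -> Y) : R := sup [set `|g x| | x in [set x : X | `|x| <= 1]].

Definition Wweak_cvg (D : set X) (L : X -> X -> R) (u : nat -> X) (x : X) : Prop :=
  (forall n, D (u n)) /\ D x /\ weak_cvg u x /\ dweak_cvg (fun n => L (u n)) (L x).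

Definition Wnorm (L : X -> X -> R) (x : X) : R := `|x| + dnorm (L x).

End Ops.

Section Problem2.
Variables (R : realType) (X Y : normedModType R).
Local Open Scope ring_scope.

Definition problem2 (D : set X) (L : X -> X -> R) (F : X -> X -> R) (E : X -> R)
  (gamma : X -> Y) (M : X -> set X) (Psi : X -> X -> R)
  (z : X) (xi : Y -> R) (x : X) : Prop :=
  M z x /\ D x /\
  forall y, M z y -> D y ->
    L x (y - x) + F x (y - x) - E (y - x) + xi (gamma (y - x)) >= Psi z x - Psi z y.
End Problem2.

From HB Require Import structures.
From mathcomp Require Import all_boot all_order all_algebra.
From mathcomp Require Import all_classical all_reals all_analysis.
From mathcomp Require Import lra.
Import Order.TTheory GRing.Theory Num.Theory.
Import numFieldNormedType.Exports.
Local Open Scope classical_set_scope.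
Local Open Scope ring_scope.

(** Testing Problem 2 with y = 0, which is admissible because 0 is interior to
    every M w, and using L x x >= 0, the coercivity of F (order p) dominates the
    remaining terms, which grow at most like |x|^beta with beta < p; this bounds
    |x|. Testing with the small y in D, which every M z contains, then bounds
    L x y from below on a ball; as D is symmetric and dense this bounds the dual
    norm of L x. The datum xi only enters through its norm. *)

Set Implicit Arguments. Unset Strict Implicit. Unset Printing Implicit Defensive.

Section GrowthBound.
Variable R : realType.

Definition growth_radius (p beta c K : R) : R :=
  Num.max 1 ((K / c) `^ (p - beta)^-1).

Lemma growth_bound (p beta c A B C t : R) :
  1 <= beta -> beta < p -> 0 < c -> 0 <= A -> 0 <= B -> 0 <= C -> 0 <= t ->
  c * t `^ p <= A * t + B * t `^ beta + C ->
  t <= growth_radius p beta c (A + B + C).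
Proof.
move=> beta1 betap c0 A0 B0 C0 t0 growth.
rewrite /growth_radius le_max.
have [t1|t1] := leP t 1; [by apply/orP; left | apply/orP; right].
have t_le_tbeta : t <= t `^ beta by apply: le1r_powR => //; exact: ltW.
have tbeta_ge1 : 1 <= t `^ beta by apply: le_trans t_le_tbeta; exact: ltW.
have pbeta0 : 0 < p - beta by lra.
have tp_split : t `^ p = t `^ beta * t `^ (p - beta).
  by rewrite -powRD ?subrKC //; apply/implyP => _; rewrite gt_eqF // (lt_trans _ t1).
(* for t > 1 every term of the right-hand side is at most its coefficient times t^beta *)
have : c * t `^ (p - beta) <= A + B + C.
  have dom : A * t + B * t `^ beta + C <= (A + B + C) * t `^ beta.
    rewrite !mulrDl; apply: lerD; [apply: lerD|] => //; first exact: ler_wpM2l.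
    by rewrite -{1}(mulr1 C) ler_wpM2l.
  have := le_trans growth dom; rewrite tp_split mulrCA (mulrC _ (t `^ beta)).
  by rewrite ler_pM2l // (lt_le_trans ltr01).
rewrite -ler_pdivlMl // mulrC => tpb.
have -> : t = (t `^ (p - beta)) `^ (p - beta)^-1.
  by rewrite -powRrM mulfV ?gt_eqF // powRr1 // ltW.
apply: ge0_ler_powR => //; rewrite ?invr_ge0 ?ltW ?nnegrE ?powR_ge0 //.
exact: le_trans (powR_ge0 _ _) tpb.
Qed.

End GrowthBound.

Section DualNorm.
Variables (R : realType) (X : normedModType R).
Implicit Types (f : X -> R) (x y v w : X).

Lemma dual0 f : dual f -> f 0 = 0.
Proof.
move=> [lin _]; have := lin 1 0 0; rewrite scale1r addr0 mul1r.
by move=> /(congr1 (fun t => t - f 0)); rewrite subrr addrK => /esym.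
Qed.

Lemma dualZ f (a : R) x : dual f -> f (a *: x) = a * f x.
Proof. by move=> df; have := df.1 a x 0; rewrite !addr0 dual0 // addr0. Qed.

Lemma dualD f x y : dual f -> f (x + y) = f x + f y.
Proof. by move=> df; have := df.1 1 x y; rewrite scale1r mul1r. Qed.

Lemma dualN f x : dual f -> f (- x) = - f x.
Proof. by move=> df; rewrite -scaleN1r dualZ // mulN1r. Qed.

Lemma dualB f x y : dual f -> f (x - y) = f x - f y.
Proof. by move=> df; rewrite dualD // dualN. Qed.

Lemma dual_has_sup f : dual f -> has_sup [set `|f x| | x in [set x : X | `|x| <= 1]].
Proof.
move=> [_ [C fC]]; split; first by exists `|f 0|, 0 => //=; rewrite normr0.
exists `|C| => _ [x /= x1 <-]; apply: le_trans (fC x) _.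
apply: le_trans (_ : `|C| * `|x| <= `|C|).
  by apply: ler_wpM2r => //; exact: ler_norm.
by rewrite -[leRHS]mulr1 ler_wpM2l.
Qed.

Lemma dnorm_ge0 f : dual f -> 0 <= dnorm f.
Proof.
move=> df; apply: le_trans (_ : `|f 0| <= _) => //.
by apply: (sup_upper_bound (dual_has_sup df)); exists 0 => //=; rewrite normr0.
Qed.

Lemma dnorm_ub f v : dual f -> `|f v| <= dnorm f * `|v|.
Proof.
move=> df; have [->|v0] := eqVneq v 0; first by rewrite dual0 // !normr0 mulr0.
have nv : 0 < `|v| by rewrite normr_gt0.
have : `|f (`|v|^-1 *: v)| <= dnorm f.
  apply: (sup_upper_bound (dual_has_sup df)); exists (`|v|^-1 *: v) => //=.
  by rewrite normrZ normfV normr_id mulVf ?gt_eqF.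
by rewrite dualZ // normrM normfV normr_id ler_pdivrMl // mulrC.
Qed.

Lemma dnorm_le f (B : R) : (forall v, `|v| <= 1 -> `|f v| <= B) -> dnorm f <= B.
Proof.
move=> fB; apply: ge_sup; first by exists `|f 0|, 0 => //=; rewrite normr0.
by move=> _ [x /= x1 <-]; apply: fB.
Qed.

Lemma dnorm_le_ball f (delta B : R) : dual f -> 0 < delta ->
  (forall w, `|w| < delta -> `|f w| <= B) -> dnorm f <= 2 / delta * B.
Proof.
move=> df delta0 fB; apply: dnorm_le => v v1.
have hdelta0 : 0 < delta / 2 by rewrite divr_gt0.
have : `|f ((delta / 2) *: v)| <= B.
  apply: fB; rewrite normrZ gtr0_norm //.
  by apply: le_lt_trans (_ : delta / 2 * 1 < delta); [rewrite ler_pM2l | lra].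
rewrite dualZ // normrM gtr0_norm // -ler_pdivlMl //.
by rewrite invf_div.
Qed.

Lemma dual_bound_dense_ball (D : set X) f (delta B : R) : dual f -> closure D = setT ->
  (forall y, D y -> `|y| < delta -> `|f y| <= B) ->
  forall w, `|w| < delta -> `|f w| <= B.
Proof.
move=> df Ddense fB w wdelta; apply/ler_addgt0Pr => e e0.
have N0 := dnorm_ge0 df.
set eps := Num.min (delta - `|w|) (e / (dnorm f + 1)).
have eps0 : 0 < eps by rewrite lt_min subr_gt0 wdelta divr_gt0 //; lra.
have eps_w : eps <= delta - `|w| by rewrite ge_min lexx.
have eps_e : eps <= e / (dnorm f + 1) by rewrite ge_min lexx orbT.
have : closure D w by rewrite Ddense.
move=> /(_ (ball w eps) (nbhsx_ballx w eps eps0)) [y [Dy]].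
rewrite -ball_normE /= => wy.
have ydelta : `|y| < delta.
  have -> : y = w - (w - y) by rewrite opprB addrC subrK.
  by apply: le_lt_trans (ler_normB _ _) _; lra.
have -> : w = y + (w - y) by rewrite addrC subrK.
rewrite dualD //; apply: le_trans (ler_normD _ _) _; apply: lerD; first exact: fB.
apply: le_trans (dnorm_ub _ df) _.
have : (dnorm f + 1) * eps <= e.
  by rewrite -ler_pdivlMl 1?mulrC //; lra.
have : dnorm f * `|w - y| <= dnorm f * eps by rewrite ler_wpM2l // ltW.
nra.
Qed.

Lemma dnorm_le_dense_lower_bound (D : set X) f (delta B : R) :
  dual f -> closure D = setT -> (forall y, D y -> D (- y)) -> 0 < delta ->
  (forall y, D y -> `|y| < delta -> - B <= f y) -> dnorm f <= 2 / delta * B.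
Proof.
move=> df Ddense Dsym delta0 fB; apply: dnorm_le_ball => //.
apply: (dual_bound_dense_ball df Ddense) => y Dy ydelta.
rewrite ler_norml fB //=.
by have := fB _ (Dsym _ Dy); rewrite normrN dualN // lerN2 => ->.
Qed.

End DualNorm.

Section Problem2Bounds.
Variables (R : realType) (X Y : normedModType R).
Variables (D : set X) (L : X -> X -> R) (K : set X) (M : X -> set X).
Variables (F : X -> X -> R) (E : X -> R) (gamma : X -> Y).
Variables (Psi : X -> X -> R) (bPsi : X -> X -> X -> R).
Variables (p beta eta cF dF cPsi dPsi ePsi : R).

Hypothesis D0 : D 0.
Hypothesis D_lin : forall (a : R) x y, D x -> D y -> D (a *: x + y).
Hypothesis L_lin : forall (a : R) x y, D x -> D y ->
  L (a *: x + y) = (fun v => a * L x v + L y v).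
Hypothesis L_dual : forall x, D x -> dual (L x).
Hypothesis D_dense : closure D = setT.
Hypothesis L_mon : forall x y, D x -> D y -> 0 <= L x (x - y) - L y (x - y).
Hypothesis M_int : interior [set v | forall w, K w -> M w v] 0.
Hypothesis F_dual : forall x, dual (F x).
Hypothesis F_bounded : forall r : R, exists C : R, forall x, `|x| <= r -> dnorm (F x) <= C.
Hypotheses (cF_gt0 : 0 < cF) (dF_ge0 : 0 <= dF).
Hypothesis F_coercive : forall x, F x x >= cF * `|x| `^ p - dF.
Hypothesis E_dual : dual E.
Hypothesis gamma_bounded : exists C : R, forall x, `|gamma x| <= C * `|x|.
Hypothesis eta_gt0 : 0 < eta.
Hypothesis bPsi_ge0 : forall x y1 y2, 0 <= bPsi x y1 y2.
Hypothesis bPsi_bounded : forall r : R, exists C : R, forall x y1 y2,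
  `|x| <= r -> `|y1| <= r -> `|y2| <= r -> bPsi x y1 y2 <= C.
Hypothesis Psi_holder : forall x y1 y2,
  Psi x y1 - Psi x y2 <= bPsi x y1 y2 * `|y1 - y2| `^ eta.
Hypothesis Psi0_bounded : forall v, `|Psi v 0| <= ePsi.
Hypotheses (cPsi_ge0 : 0 <= cPsi) (dPsi_ge0 : 0 <= dPsi).
Hypotheses (beta_ge1 : 1 <= beta) (beta_lt_p : beta < p).
Hypothesis Psi_lower : forall v y, Psi v y >= - cPsi * `|y| `^ beta - dPsi.

Lemma L_self_ge0 x : D x -> 0 <= L x x.
Proof.
move=> Dx; have L0 v : L 0 v = 0.
  have := L_lin (-1) D0 D0; rewrite scaler0 addr0 => /(congr1 (fun g => g v)) ->.
  by rewrite mulN1r addNr.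
by have := L_mon Dx D0; rewrite subr0 L0 subr0.
Qed.

Lemma dual_gamma_le (xi : Y -> R) (Cg r : R) v :
  (forall x, `|gamma x| <= Cg * `|x|) -> dual xi -> dnorm xi <= r ->
  `|xi (gamma v)| <= r * Cg * `|v|.
Proof.
move=> gammaCg dxi xir; apply: le_trans (dnorm_ub _ dxi) _.
by rewrite -mulrA; apply: ler_pM; rewrite ?dnorm_ge0.
Qed.

Lemma Psi_le_near0 z y (Cb s : R) :
  bPsi z y 0 <= Cb -> `|y| <= s -> Psi z y <= ePsi + Cb * s `^ eta.
Proof.
move=> bCb ys; have := Psi_holder z y 0; rewrite subr0.
have : bPsi z y 0 * `|y| `^ eta <= Cb * s `^ eta.
  apply: ler_pM; rewrite ?powR_ge0 //.
  by apply: ge0_ler_powR; rewrite ?nnegrE ?(ltW eta_gt0) // (le_trans _ ys).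
have := le_trans (ler_norm _) (Psi0_bounded z); lra.
Qed.

Lemma problem2_norm_le (Cg r : R) z xi x :
  0 <= Cg -> (forall x, `|gamma x| <= Cg * `|x|) -> M z 0 -> dual xi -> dnorm xi <= r ->
  problem2 D L F E gamma M Psi z xi x ->
  `|x| <= growth_radius p beta cF (dnorm E + r * Cg + cPsi + (ePsi + dPsi + dF)).
Proof.
move=> Cg0 gammaCg Mz0 dxi xir [_ [Dx test]].
have r0 : 0 <= r := le_trans (dnorm_ge0 dxi) xir.
have ePsi0 : 0 <= ePsi := le_trans (normr_ge0 _) (Psi0_bounded z).
have := test 0 Mz0 D0.
rewrite !sub0r (dualN _ (L_dual Dx)) (dualN _ (F_dual x)) (dualN _ E_dual) => tested.
have Lxx := L_self_ge0 Dx.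
have Fxx := F_coercive x.
have Psix := Psi_lower z x.
have Psiz0 := le_trans (ler_norm _) (Psi0_bounded z).
have Ex := le_trans (ler_norm _) (dnorm_ub x E_dual).
have := le_trans (ler_norm _) (dual_gamma_le (- x) gammaCg dxi xir).
rewrite normrN => xigx.
apply: growth_bound; rewrite ?addr_ge0 ?mulr_ge0 ?dnorm_ge0 //.
rewrite mulNr in Psix; rewrite !mulrDl; lra.
Qed.

Lemma problem2_L_lower_bound (Cg r T CF P s : R) z xi x y :
  0 <= Cg -> (forall x, `|gamma x| <= Cg * `|x|) -> dual xi -> dnorm xi <= r ->
  problem2 D L F E gamma M Psi z xi x -> M z y -> D y ->
  `|x| <= T -> `|y| <= s -> dnorm (F x) <= CF -> Psi z y <= P ->
  - ((CF + dnorm E + r * Cg) * (s + T) + cPsi * T `^ beta + dPsi + P) <= L x y.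
Proof.
move=> Cg0 gammaCg dxi xir [_ [Dx test]] Mzy Dy xT ys FCF Psizy.
have T0 : 0 <= T := le_trans (normr_ge0 _) xT.
have := test y Mzy Dy; rewrite (dualB _ _ (L_dual Dx)) => tested.
have yx : `|y - x| <= s + T := le_trans (ler_normB _ _) (lerD ys xT).
have Fyx : F x (y - x) <= CF * (s + T).
  apply: le_trans (ler_norm _) (le_trans (dnorm_ub _ (F_dual x)) _).
  exact: ler_pM (dnorm_ge0 _) (normr_ge0 _) FCF yx.
have Eyx : - (dnorm E * (s + T)) <= E (y - x).
  apply/lerNnormlW/(le_trans (dnorm_ub _ E_dual)).
  by apply: ler_wpM2l yx; exact: dnorm_ge0.
have xigyx : xi (gamma (y - x)) <= r * Cg * (s + T).
  apply: le_trans (ler_norm _) (le_trans (dual_gamma_le _ gammaCg dxi xir) _).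
  by apply: ler_wpM2l yx; rewrite mulr_ge0 // (le_trans (dnorm_ge0 dxi) xir).
have Psix : - (cPsi * T `^ beta) - dPsi <= Psi z x.
  have : cPsi * `|x| `^ beta <= cPsi * T `^ beta.
    apply: ler_wpM2l => //; apply: ge0_ler_powR; rewrite ?nnegrE ?normr_ge0 //.
    exact: le_trans ler01 beta_ge1.
  have := Psi_lower z x; rewrite mulNr; lra.
have Lxx := L_self_ge0 Dx.
rewrite !mulrDl; lra.
Qed.

Lemma problem2_solution_bounded (r : R) : exists C : R, forall z xi x,
  K z -> dual xi -> `|z| + dnorm xi <= r ->
  problem2 D L F E gamma M Psi z xi x -> Wnorm L x <= C.
Proof.
have [delta delta0 M_ball] : exists2 delta : R, 0 < delta &
    forall y, `|y| < delta -> forall w, K w -> M w y.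
  by have [e /= e0 Me] := nbhs_norm0P.1 M_int; exists e => // y ye w Kw; apply: Me.
have [Cg Cg0 gammaCg] : exists2 Cg : R, 0 <= Cg & forall x, `|gamma x| <= Cg * `|x|.
  have [C gammaC] := gamma_bounded; exists `|C| => // x.
  by apply: le_trans (gammaC x) _; apply: ler_wpM2r => //; exact: ler_norm.
have D_sym y : D y -> D (- y).
  by move=> Dy; have := D_lin (-1) Dy D0; rewrite addr0 scaleN1r.
set T := growth_radius p beta cF (dnorm E + r * Cg + cPsi + (ePsi + dPsi + dF)).
have [CF FCF] := F_bounded T.
have [Cb bPsiCb] := bPsi_bounded (Num.max r delta).
set P := ePsi + Cb * delta `^ eta.
exists (T + 2 / delta *
  ((CF + dnorm E + r * Cg) * (delta + T) + cPsi * T `^ beta + dPsi + P)).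
move=> z xi x Kz dxi zxir sol.
have xir : dnorm xi <= r by have := normr_ge0 z; lra.
have zr : `|z| <= r by have := dnorm_ge0 dxi; lra.
have xT : `|x| <= T.
  by apply: (problem2_norm_le Cg0 gammaCg _ dxi xir sol); apply: M_ball; rewrite ?normr0.
apply: (lerD xT).
apply: (dnorm_le_dense_lower_bound (L_dual sol.2.1) D_dense D_sym delta0) => y Dy yd.
apply: (problem2_L_lower_bound Cg0 gammaCg dxi xir sol (M_ball _ yd _ Kz) Dy xT).
- exact: ltW.
- exact: FCF.
- apply: Psi_le_near0 (ltW yd); apply: bPsiCb; rewrite ?normr0 le_max ?zr //.
  all: by rewrite ?(ltW yd) ?(ltW delta0) orbT.
Qed.

End Problem2Bounds.

Theorem mainTheorem3
  (R : realType) (X Y : completeNormedModType R) (p : R)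
  (D : set X) (L : X -> X -> R) (K : set X) (M : X -> set X)
  (F : X -> X -> R) (cF dF : R)
  (G : Y -> set (Y -> R)) (cG dG : R)
  (E : X -> R) (gamma : X -> Y)
  (Psi : X -> X -> R) (eta : R) (bPsi : X -> X -> X -> R)
  (ePsi cPsi dPsi beta : R) :
  (* the spaces *)
  reflexive_space X -> separable_space X ->
  reflexive_space Y -> separable_space Y ->
  1 < p ->
  (* (H L) : linear, densely defined, maximal monotone, D(L) -> X^* *)
  D 0 ->
  (forall (a : R) x y, D x -> D y -> D (a *: x + y)) ->
  (forall (a : R) x y, D x -> D y ->
     L (a *: x + y) = (fun v => a * L x v + L y v)) ->
  (forall x, D x -> dual (L x)) ->
  closure D = setT ->
  (forall x y, D x -> D y -> 0 <= L x (x - y) - L y (x - y)) ->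
  (forall x f, dual f -> (forall y, D y -> 0 <= f (x - y) - L y (x - y)) ->
     D x /\ L x = f) ->
  (* (H K) *)
  K !=set0 -> closed K -> cvx K ->
  (* (H M) *)
  (forall w, K w -> M w `<=` K /\ M w !=set0 /\ closed (M w) /\ cvx (M w)) ->
  interior [set v | forall w, K w -> M w v] 0 ->
  (forall (yn xn : nat -> X) y x,
     (forall n, K (yn n)) -> (forall n, K (xn n)) ->
     (forall n, M (yn n) (xn n) /\ D (xn n)) ->
     Wweak_cvg D L yn y -> Wweak_cvg D L xn x ->
     M y x /\ D x) ->
  (* (H F) *)
  (forall x, dual (F x)) ->
  (forall r : R, exists C : R, forall x, `|x| <= r -> dnorm (F x) <= C) ->
  (forall x y, 0 <= F x (x - y) - F y (x - y)) ->
  (forall x y z, {within `[0, 1], continuous (fun t : R => F (x + t *: y) z)}) ->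
  0 < cF -> 0 <= dF ->
  (forall x, F x x >= cF * `|x| `^ p - dF) ->
  (* (H G) *)
  (forall z, G z `<=` @dual R Y /\ G z !=set0 /\ dclosed (G z) /\ dcvx (G z)) ->
  (forall (zn : nat -> Y) z (xin : nat -> Y -> R) xi,
     zn @ \oo --> z -> (forall n, G (zn n) (xin n)) -> dweak_cvg xin xi ->
     G z xi) ->
  0 <= cG -> 0 <= dG ->
  (forall z xi, G z xi -> dnorm xi <= cG * `|z| `^ (p - 1) + dG) ->
  (* (H E) *)
  dual E ->
  (* (H gamma) *)
  (forall (a : R) x y, gamma (a *: x + y) = a *: gamma x + gamma y) ->
  (exists C : R, forall x, `|gamma x| <= C * `|x|) ->
  (forall r : R, compact (closure (gamma @` [set x | D x /\ Wnorm L x <= r]))) ->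
  (* (H Psi) *)
  (forall x, lsc (Psi x)) ->
  (forall x y1 y2 (t : R), 0 <= t -> t <= 1 ->
     Psi x (t *: y1 + (1 - t) *: y2) <= t * Psi x y1 + (1 - t) * Psi x y2) ->
  0 < eta -> eta < p ->
  (forall x y1 y2, 0 <= bPsi x y1 y2) ->
  (forall r : R, exists C : R, forall x y1 y2,
     `|x| <= r -> `|y1| <= r -> `|y2| <= r -> bPsi x y1 y2 <= C) ->
  (forall x y1 y2, Psi x y1 - Psi x y2 <= bPsi x y1 y2 * `|y1 - y2| `^ eta) ->
  (forall r : R, forall eps : R, 0 < eps -> exists rho : R, forall z x,
     `|z| <= r -> rho <= `|x| -> bPsi z 0 x <= eps * `|x| `^ (p - eta)) ->
  (forall (wn yn xn : nat -> X) w y x,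
     (forall n, K (wn n) /\ D (wn n)) -> (forall n, K (yn n) /\ D (yn n)) ->
     (forall n, K (xn n) /\ D (xn n)) ->
     Wweak_cvg D L wn w -> Wweak_cvg D L xn x -> yn @ \oo --> y ->
     forall eps : R, 0 < eps ->
       \forall n \near \oo,
         Psi (wn n) (yn n) - Psi (wn n) (xn n) <= Psi w y - Psi w x + eps) ->
  (forall v, exists f, dual f /\ forall y, Psi v y - Psi v 0 >= f y) ->
  (forall v, `|Psi v 0| <= ePsi) ->
  0 <= cPsi -> 0 <= dPsi -> 1 <= beta -> beta < p ->
  (forall v y, Psi v y >= - cPsi * `|y| `^ beta - dPsi) ->
  (* smallness and strict monotonicity *)
  cF > cG * opnorm gamma `^ p ->
  (forall x y, x <> y -> 0 < F x (x - y) - F y (x - y)) ->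
  (* conclusion: the solution map S is bounded from K x Y^* into W *)
  forall r : R, exists C : R, forall z xi x,
    K z -> dual xi -> `|z| + dnorm xi <= r ->
    problem2 D L F E gamma M Psi z xi x ->
    Wnorm L x <= C.
Proof.
move=> _ _ _ _ _ D0 D_lin L_lin L_dual D_dense L_mon _ _ _ _ _ M_int _
  F_dual F_bounded _ _ cF_gt0 dF_ge0 F_coercive _ _ _ _ _ E_dual _ gamma_bounded _
  _ _ eta_gt0 _ bPsi_ge0 bPsi_bounded Psi_holder _ _ _ Psi0_bounded
  cPsi_ge0 dPsi_ge0 beta_ge1 beta_lt_p Psi_lower _ _.
exact: (problem2_solution_bounded D0 D_lin L_lin L_dual D_dense L_mon M_int
  F_dual F_bounded cF_gt0 dF_ge0 F_coercive E_dual gamma_bounded eta_gt0 bPsi_ge0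
  bPsi_bounded Psi_holder Psi0_bounded cPsi_ge0 dPsi_ge0 beta_ge1 beta_lt_p Psi_lower).
Qed.
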